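(* For all integers $m,k\ge 0$, $$\zeta(\bar 1,\{1\}_m,\bar 1,\{1\}_k)=(-1)^{m+1}\,\mathrm{Li}_{k+2,\{1\}_m}\!\left(\tfrac12\right).$$
   Context: For nonzero integers $s_1,\dots,s_k$, with $\operatorname{sgn}(s)=1$ if $s>0$ and $-1$ if $s<0$, the multiple zeta value is $\zeta(s_1,\dots,s_k)=\sum_{n_1>n_2>\cdots>n_k\ge 1}\prod_{j=1}^k n_j^{-|s_j|}\operatorname{sgn}(s_j)^{n_j}$. A barred entry $\bar p$ denotes the negative entry $-p$. The notation $\{1\}_d$ means the entry $1$ repeated $d$ times ($d=0$ means no entries). For positive integers $s_1,\dots,s_r$ and $0\le x<1$, the multiple polylogarithm is $\mathrm{Li}_{s_1,\dots,s_r}(x)=\sum_{n_1>\cdots>n_r>0}\frac{x^{n_1}}{n_1^{s_1}\cdots n_r^{s_r}}$. *)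

From Stdlib Require Import Reals ZArith List.
From Coquelicot Require Import Coquelicot.
Open Scope R_scope.

(* Summand of an (alternating) MZV for a nonzero signed entry s at index n >= 1:
   sgn(s)^n / n^|s|.  (Index 0 is excluded explicitly by the sums below.) *)
Definition mzv_term (s : Z) (n : nat) : R :=
  (if (0 <? s)%Z then 1 else (-1) ^ n) / (INR n) ^ (Z.abs_nat s).

(* Truncated nested sum:
   mzv_trunc [s_1;...;s_k] N = sum_{N >= n_1 > n_2 > ... > n_k >= 1}
                               prod_j sgn(s_j)^{n_j} / n_j^{|s_j|}. *)
Fixpoint mzv_trunc (s : list Z) (N : nat) : R :=
  match s with
  | nil => 1
  | a :: t =>
      sum_n (fun n => if Nat.eqb n 0 then 0
                      else mzv_term a n * mzv_trunc t (n - 1)) N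
  end.

Definition mzv_converges_to (s : list Z) (L : R) : Prop :=
  is_lim_seq (fun N => mzv_trunc s N) L.

(* Truncated multiple polylogarithm:
   Li_trunc x [s_1;...;s_r] N = sum_{N >= n_1 > ... > n_r > 0}
                                x^{n_1} / (n_1^{s_1} ... n_r^{s_r}). *)
Definition Li_trunc (x : R) (s : list nat) (N : nat) : R :=
  match s with
  | nil => 0
  | a :: t =>
      sum_n (fun n => if Nat.eqb n 0 then 0
                      else x ^ n / (INR n) ^ a
                           * mzv_trunc (map Z.of_nat t) (n - 1)) N
  end.

Definition Li_converges_to (x : R) (s : list nat) (L : R) : Prop :=
  is_lim_seq (fun N => Li_trunc x s N) L.

From Stdlib Require Import Reals ZArith List Lra Lia.
From Coquelicot Require Import Coquelicot.
Open Scope R_scope.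

(* For a tail s, write zeta(-1, s) = sum_n (-1)^n d_n with d_n = S_s(n-1)/n, S_s the truncated
   sum of s.  For s = ({1}_j, -1, {1}_k) one has |S_s(n)| <= H_n^|s|, so d_n tends to 0 with
   summable variation: the alternating series converges (Dirichlet) and its sum is
   lim_{x -> 1-} A_j(x), where A_j(x) = sum_n (-1)^n d_n x^n (Abel).
   Peeling off the first entry of the tail gives (1+x) A_(j+1)' = -A_j and
   (1+x) A_0' = -(-ln(1-x))^(k+1)/(k+1)!.  With x = 1 - 2v, the functions
   F_j(v) = (-1)^(j+1) A_j(1-2v) satisfy F_0' = -(-ln 2v)^(k+1)/(k+1)!/(1-v),
   F_(j+1)' = -F_j/(1-v) and F_j(1/2) = 0.  The same system is solved explicitly by
   R_j(v) = sum_(i<=j) ln(1-v)^(j-i)/(j-i)! (K_i - J_i(v)), where J_i combines the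
   polylogarithms Li_{p,{1}_i}(v) with powers of -ln 2v and J_i(1/2) = K_i = Li_{k+2,{1}_i}(1/2).
   Letting v -> 0+, F_m(v) -> (-1)^(m+1) zeta and R_m(v) -> K_m. *)

Lemma INR_S_pos n : 0 < INR (S n).
Proof. apply lt_0_INR; lia. Qed.

Lemma sum_n_S (a : nat -> R) n : sum_n a (S n) = sum_n a n + a (S n).
Proof. exact (sum_Sn a n). Qed.

Lemma sum_n_ext_R (a b : nat -> R) N : (forall n, a n = b n) -> sum_n a N = sum_n b N.
Proof. apply sum_n_ext. Qed.

Lemma sum_n_add (a b : nat -> R) N : sum_n (fun n => a n + b n) N = sum_n a N + sum_n b N.
Proof. exact (sum_n_plus a b N). Qed.

Lemma sum_n_mul_l (c : R) (a : nat -> R) N : sum_n (fun n => c * a n) N = c * sum_n a N.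
Proof. exact (sum_n_mult_l c a N). Qed.

Lemma sum_n_zero N : sum_n (fun _ => 0) N = 0.
Proof. rewrite sum_n_const. apply Rmult_0_r. Qed.

Lemma Rinv_INR_S_le_1 n : / INR (S n) <= 1.
Proof.
  rewrite <- Rinv_1. apply Rinv_le_contravar; [lra|].
  rewrite S_INR. pose proof (pos_INR n). lra.
Qed.

(** * Truncated sums and harmonic numbers *)

Lemma mzv_trunc_cons_0 a t : mzv_trunc (a :: t) 0 = 0.
Proof. simpl. rewrite sum_O. reflexivity. Qed.

Lemma mzv_trunc_cons_S a t n :
  mzv_trunc (a :: t) (S n) = mzv_trunc (a :: t) n + mzv_term a (S n) * mzv_trunc t n.
Proof. simpl mzv_trunc at 1. rewrite sum_n_S. simpl. rewrite Nat.sub_0_r. reflexivity. Qed.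

Lemma mzv_term_1 n : mzv_term 1 n = / INR n.
Proof. unfold mzv_term; simpl. rewrite Rmult_1_r. unfold Rdiv. ring. Qed.

Lemma mzv_term_m1 n : mzv_term (-1) n = (-1) ^ n / INR n.
Proof. unfold mzv_term; simpl. rewrite Rmult_1_r. reflexivity. Qed.

Lemma Rabs_mzv_term a n : Z.abs_nat a = 1%nat -> Rabs (mzv_term a n) = / INR n.
Proof.
  intros Ha. unfold mzv_term. rewrite Ha, pow_1. unfold Rdiv. rewrite Rabs_mult.
  assert (Hsgn : Rabs (if (0 <? a)%Z then 1 else (-1) ^ n) = 1).
  { destruct (0 <? a)%Z; [apply Rabs_R1 | apply pow_1_abs]. }
  rewrite Hsgn, Rmult_1_l. apply Rabs_pos_eq.
  destruct n; [simpl; rewrite Rinv_0; lra | left; apply Rinv_0_lt_compat, INR_S_pos].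
Qed.

Definition harm (n : nat) : R := mzv_trunc (1%Z :: nil) n.

Lemma harm_0 : harm 0 = 0.
Proof. apply mzv_trunc_cons_0. Qed.

Lemma harm_S n : harm (S n) = harm n + / INR (S n).
Proof. unfold harm. rewrite mzv_trunc_cons_S, mzv_term_1. simpl. ring. Qed.

Lemma harm_le_S n : harm n <= harm (S n).
Proof. rewrite harm_S. pose proof (Rinv_0_lt_compat _ (INR_S_pos n)). lra. Qed.

Lemma harm_le n m : (n <= m)%nat -> harm n <= harm m.
Proof. induction 1; [lra | pose proof (harm_le_S m); lra]. Qed.

Lemma harm_ge0 n : 0 <= harm n.
Proof. rewrite <- harm_0. apply harm_le. lia. Qed.

Lemma harm_ge1 n : 1 <= harm (S n).
Proof.
  apply Rle_trans with (harm 1); [|apply harm_le; lia].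
  rewrite harm_S, harm_0. simpl. lra.
Qed.

Definition unit_entries (s : list Z) : Prop := List.Forall (fun a => Z.abs_nat a = 1%nat) s.

Lemma Rabs_mzv_trunc_le s n : unit_entries s -> Rabs (mzv_trunc s n) <= harm n ^ length s.
Proof.
  revert n. induction s as [|a t IHt]; intros n Hs.
  { simpl. rewrite Rabs_R1. lra. }
  inversion Hs as [|? ? Ha Ht]; subst. specialize (fun n => IHt n Ht).
  induction n as [|n IHn].
  { rewrite mzv_trunc_cons_0, harm_0, Rabs_R0. simpl. lra. }
  rewrite mzv_trunc_cons_S, harm_S. simpl length.
  eapply Rle_trans; [apply Rabs_triang|].
  rewrite Rabs_mult, Rabs_mzv_term by exact Ha.
  pose proof (IHt n) as Hc. pose proof (harm_ge0 n) as Hh.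
  pose proof (Rinv_0_lt_compat _ (INR_S_pos n)) as Hy.
  set (y := / INR (S n)) in *. set (h := harm n) in *. set (L := length t) in *.
  assert (Hpow : h ^ L <= (h + y) ^ L) by (apply pow_incr; lra).
  assert (h * h ^ L <= h * (h + y) ^ L) by (apply Rmult_le_compat_l; lra).
  assert (y * Rabs (mzv_trunc t n) <= y * (h + y) ^ L) by (apply Rmult_le_compat_l; lra).
  change ((h + y) ^ S L) with ((h + y) * (h + y) ^ L).
  replace (h ^ length (a :: t)) with (h * h ^ L) in IHn by reflexivity.
  rewrite Rmult_plus_distr_r. lra.
Qed.

Lemma Rabs_mzv_trunc_step_le s n : unit_entries s ->
  Rabs (mzv_trunc s (S n) - mzv_trunc s n) <= harm (S n) ^ length s / INR (S n).
Proof.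
  intros Hs. pose proof (Rinv_0_lt_compat _ (INR_S_pos n)) as Hy.
  destruct s as [|a t].
  { cbn [mzv_trunc length]. rewrite Rminus_eq_0, Rabs_R0, pow_O. unfold Rdiv. lra. }
  inversion Hs as [|? ? Ha Ht]; subst.
  rewrite mzv_trunc_cons_S, Rplus_minus_l.
  rewrite Rabs_mult, Rabs_mzv_term by exact Ha. rewrite Rmult_comm. unfold Rdiv.
  apply Rmult_le_compat_r; [lra|].
  eapply Rle_trans; [apply Rabs_mzv_trunc_le, Ht|].
  pose proof (harm_ge1 n). pose proof (harm_ge0 n). pose proof (harm_le_S n).
  simpl length. change (harm (S n) ^ S (length t)) with (harm (S n) * harm (S n) ^ length t).
  assert (harm n ^ length t <= harm (S n) ^ length t) by (apply pow_incr; lra).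
  assert (0 <= harm (S n) ^ length t) by (apply pow_le; lra).
  nra.
Qed.

(** * Summability of H_n^r / (n (n+1)) *)

Definition harm_weight (r n : nat) : R :=
  if Nat.eqb n 0 then 0 else harm n ^ r / (INR n * INR (S n)).

Lemma harm_weight_ge0 r n : 0 <= harm_weight r n.
Proof.
  unfold harm_weight. destruct n as [|n]; simpl Nat.eqb; [lra|].
  apply Rmult_le_pos; [apply pow_le, harm_ge0|].
  left. apply Rinv_0_lt_compat, Rmult_lt_0_compat; apply INR_S_pos.
Qed.

Lemma harm_weight_S r n :
  harm_weight r (S n) = harm (S n) ^ r * (/ INR (S n) - / INR (S (S n))).
Proof.
  unfold harm_weight. simpl Nat.eqb. cbv iota.
  pose proof (INR_S_pos n). rewrite (S_INR (S n)). field. lra.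
Qed.

Lemma pow_S_sub_le a b r : 0 <= b <= a -> a ^ S r - b ^ S r <= INR (S r) * a ^ r * (a - b).
Proof.
  intros [Hb Hba]. induction r as [|r IHr]; [simpl; lra|].
  assert (0 <= b ^ S r) by (apply pow_le; lra).
  assert (b ^ S r <= a ^ S r) by (apply pow_incr; lra).
  assert (a * (a ^ S r - b ^ S r) <= a * (INR (S r) * a ^ r * (a - b)))
    by (apply Rmult_le_compat_l; lra).
  assert (b ^ S r * (a - b) <= a ^ S r * (a - b)) by (apply Rmult_le_compat_r; lra).
  rewrite (S_INR (S r)). simpl pow in *. nra.
Qed.

Lemma harm_pow_step_le r n :
  (harm (S n) ^ S r - harm n ^ S r) / INR (S n) <= 2 * INR (S r) * harm_weight r (S n).
Proof.
  pose proof (pow_S_sub_le (harm (S n)) (harm n) r (conj (harm_ge0 n) (harm_le_S n))) as Hd.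
  rewrite harm_S in Hd at 3. rewrite Rplus_minus_l in Hd.
  rewrite harm_weight_S.
  pose proof (INR_S_pos n) as Hn. pose proof (pos_INR (S r)) as Hr.
  assert (Hh : 0 <= harm (S n) ^ r) by apply pow_le, harm_ge0.
  set (q := INR (S n)) in *. set (h := harm (S n) ^ r) in *.
  assert (Hq : 1 <= q) by (unfold q; rewrite S_INR; pose proof (pos_INR n); lra).
  assert (Hsq : / q * / q <= 2 * (/ q - / INR (S (S n)))).
  { rewrite (S_INR (S n)). fold q.
    assert (E : 2 * (/ q - / (q + 1)) - / q * / q = (q - 1) / (q * q * (q + 1))) by (field; lra).
    assert (0 <= (q - 1) / (q * q * (q + 1))).
    { apply Rmult_le_pos; [lra|]. left. apply Rinv_0_lt_compat. nra. }
    lra. }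
  apply Rle_trans with (INR (S r) * h * / q * / q).
  { unfold Rdiv. apply Rmult_le_compat_r; [left; apply Rinv_0_lt_compat; lra | exact Hd]. }
  replace (INR (S r) * h * / q * / q) with (INR (S r) * h * (/ q * / q)) by ring.
  replace (2 * INR (S r) * (h * (/ q - / INR (S (S n)))))
    with (INR (S r) * h * (2 * (/ q - / INR (S (S n))))) by ring.
  apply Rmult_le_compat_l; [apply Rmult_le_pos|]; lra.
Qed.

Lemma harm_weight_sum_0 N : sum_n (harm_weight 0) N + / INR (S N) = 1.
Proof.
  induction N as [|N IHN].
  - rewrite sum_O. unfold harm_weight. simpl. lra.
  - rewrite sum_n_S, harm_weight_S, pow_O. lra.
Qed.

(* Abel summation: the boundary term [H_N^(r+1)/(N+1)] telescopes against [harm_weight (S r)]. *)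
Lemma harm_weight_sum_S_le r N :
  sum_n (harm_weight (S r)) N + harm N ^ S r / INR (S N)
  <= 2 * INR (S r) * sum_n (harm_weight r) N.
Proof.
  induction N as [|N IHN].
  - rewrite !sum_O. unfold harm_weight. simpl Nat.eqb. cbv iota.
    rewrite harm_0, pow_i by lia. unfold Rdiv. lra.
  - rewrite !sum_n_S.
    pose proof (harm_pow_step_le r N) as Hstep.
    rewrite (harm_weight_S (S r)). unfold Rdiv in *. lra.
Qed.

Lemma harm_weight_sum_le r N : sum_n (harm_weight r) N <= 2 ^ r * INR (fact r).
Proof.
  revert N. induction r as [|r IHr]; intros N.
  - pose proof (harm_weight_sum_0 N). pose proof (Rinv_0_lt_compat _ (INR_S_pos N)). simpl. lra.
  - pose proof (harm_weight_sum_S_le r N) as HS.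
    assert (0 <= harm N ^ S r / INR (S N)).
    { apply Rmult_le_pos; [apply pow_le, harm_ge0 | left; apply Rinv_0_lt_compat, INR_S_pos]. }
    assert (2 * INR (S r) * sum_n (harm_weight r) N <= 2 * INR (S r) * (2 ^ r * INR (fact r))).
    { apply Rmult_le_compat_l; [pose proof (pos_INR (S r)); lra | apply IHr]. }
    rewrite fact_simpl, mult_INR. simpl pow. lra.
Qed.

Lemma ex_series_harm_weight r : ex_series (harm_weight r).
Proof.
  destruct (ex_finite_lim_seq_incr (sum_n (harm_weight r)) (2 ^ r * INR (fact r))) as [l Hl].
  - intro n. rewrite sum_n_S. pose proof (harm_weight_ge0 r (S n)). lra.
  - apply harm_weight_sum_le.
  - exists l. exact Hl.
Qed.

Lemma harm_weight_tail_ge r N j :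
  harm N ^ r * (/ INR (S N) - / INR (S (N + j)))
  <= sum_n (harm_weight r) (N + j) - sum_n (harm_weight r) N.
Proof.
  induction j as [|j IHj].
  { rewrite Nat.add_0_r. lra. }
  rewrite Nat.add_succ_r, sum_n_S, harm_weight_S.
  assert (/ INR (S (S (N + j))) <= / INR (S (N + j))).
  { apply Rinv_le_contravar; [apply INR_S_pos | apply le_INR; lia]. }
  assert (harm N ^ r <= harm (S (N + j)) ^ r).
  { apply pow_incr. split; [apply harm_ge0 | apply harm_le; lia]. }
  assert (harm N ^ r * (/ INR (S (N + j)) - / INR (S (S (N + j))))
          <= harm (S (N + j)) ^ r * (/ INR (S (N + j)) - / INR (S (S (N + j))))).
  { apply Rmult_le_compat_r; lra. }
  lra.
Qed.

(* The block of [harm_weight r] from [N+1] to [2N+2] dominates [H_{N+1}^r / (3 (N+2))]. *)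
Lemma is_lim_seq_harm_pow_div r : is_lim_seq (fun N => harm N ^ r / INR (S N)) 0.
Proof.
  apply is_lim_seq_incr_1.
  destruct (ex_series_harm_weight r) as [l Hl].
  set (s := sum_n (harm_weight r)).
  assert (Hblock : is_lim_seq (fun n => s (S n + S n)%nat - s (S n)) 0).
  { replace 0 with (l - l) by ring.
    apply is_lim_seq_minus'.
    - apply (is_lim_seq_subseq s l (fun n => S n + S n)%nat); [|exact Hl].
      intros P [N HN]. exists N. intros n Hn. apply HN. lia.
    - apply (is_lim_seq_subseq s l S); [|exact Hl].
      intros P [N HN]. exists N. intros n Hn. apply HN. lia. }
  apply is_lim_seq_le_le with (u := fun _ => 0) (w := fun n => 3 * (s (S n + S n)%nat - s (S n))).
  - intro n. split.
    { apply Rmult_le_pos; [apply pow_le, harm_ge0 | left; apply Rinv_0_lt_compat, INR_S_pos]. }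
    pose proof (harm_weight_tail_ge r (S n) (S n)) as Ht. fold s in Ht.
    assert (Hp : 0 <= harm (S n) ^ r) by (apply pow_le, harm_ge0).
    assert (Hthird : / INR (S (S n)) <= 3 * (/ INR (S (S n)) - / INR (S (S n + S n)))).
    { rewrite !S_INR, plus_INR, !S_INR. pose proof (pos_INR n).
      assert (E : 3 * (/ (INR n + 1 + 1) - / (INR n + 1 + (INR n + 1) + 1)) - / (INR n + 1 + 1)
                  = INR n / ((INR n + 1 + 1) * (INR n + 1 + (INR n + 1) + 1))) by (field; lra).
      assert (0 <= INR n / ((INR n + 1 + 1) * (INR n + 1 + (INR n + 1) + 1))).
      { apply Rmult_le_pos; [lra|]. left. apply Rinv_0_lt_compat, Rmult_lt_0_compat; lra. }
      lra. }
    unfold Rdiv.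
    apply Rle_trans with (harm (S n) ^ r * (3 * (/ INR (S (S n)) - / INR (S (S n + S n))))).
    + apply Rmult_le_compat_l; assumption.
    + lra.
  - apply is_lim_seq_const.
  - replace 0 with (3 * 0) by ring. apply (is_lim_seq_scal_l _ 3 0). exact Hblock.
Qed.

(** * Sequences c(n-1)/n of bounded variation *)

Definition pred_div (c : nat -> R) (n : nat) : R :=
  if Nat.eqb n 0 then 0 else c (n - 1)%nat / INR n.

Lemma pred_div_S c n : pred_div c (S n) = c n / INR (S n).
Proof. unfold pred_div. simpl. rewrite Nat.sub_0_r. reflexivity. Qed.

Lemma sum_n_sign n : sum_n (fun k => (-1) ^ k) n = (1 + (-1) ^ n) / 2.
Proof.
  induction n as [|n IHn].
  - rewrite sum_O. simpl. field.
  - rewrite sum_n_S, IHn. simpl. field.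
Qed.

Section PredDiv.

Variables (c : nat -> R) (r : nat).
Hypothesis c_0 : c 0%nat = 0.
Hypothesis c_bound : forall n, Rabs (c n) <= harm n ^ r.
Hypothesis c_step : forall n, Rabs (c (S n) - c n) <= harm (S n) ^ r / INR (S n).

Lemma is_lim_seq_pred_div : is_lim_seq (pred_div c) 0.
Proof.
  apply is_lim_seq_incr_1, is_lim_seq_abs_0.
  apply is_lim_seq_le_le with (u := fun _ => 0) (w := fun N => harm N ^ r / INR (S N)).
  - intro N. rewrite pred_div_S. split; [apply Rabs_pos|].
    pose proof (Rinv_0_lt_compat _ (INR_S_pos N)).
    unfold Rdiv. rewrite Rabs_mult, (Rabs_pos_eq (/ INR (S N))) by lra.
    apply Rmult_le_compat_r; [lra | apply c_bound].
  - apply is_lim_seq_const.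
  - apply is_lim_seq_harm_pow_div.
Qed.

Lemma Rabs_pred_div_step_le n : Rabs (pred_div c (S n) - pred_div c n) <= 2 * harm_weight r n.
Proof.
  destruct n as [|N].
  { rewrite pred_div_S, c_0. unfold pred_div, harm_weight. simpl.
    unfold Rdiv. rewrite Rmult_0_l, Rminus_0_r, Rabs_R0. lra. }
  rewrite !pred_div_S, harm_weight_S.
  pose proof (INR_S_pos N) as P1. pose proof (INR_S_pos (S N)) as P2.
  set (q1 := / INR (S N)). set (q2 := / INR (S (S N))).
  assert (Hq2 : 0 < q2) by (apply Rinv_0_lt_compat; lra).
  assert (Hg : q1 * q2 = q1 - q2) by (unfold q1, q2; rewrite (S_INR (S N)); field; lra).
  assert (E : c (S N) / INR (S (S N)) - c N / INR (S N) = (c (S N) - c N) * q2 - c N * (q1 * q2))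
    by (unfold q1, q2; rewrite (S_INR (S N)); field; lra).
  rewrite E, <- Hg.
  assert (Hh : harm N ^ r <= harm (S N) ^ r)
    by (apply pow_incr; split; [apply harm_ge0 | apply harm_le_S]).
  assert (Hq12 : 0 < q1 * q2) by (apply Rmult_lt_0_compat; [apply Rinv_0_lt_compat|]; lra).
  assert (T1 : Rabs ((c (S N) - c N) * q2) <= harm (S N) ^ r * (q1 * q2)).
  { rewrite Rabs_mult, (Rabs_pos_eq q2) by lra. rewrite <- Rmult_assoc.
    apply Rmult_le_compat_r; [lra | apply c_step]. }
  assert (T2 : Rabs (c N * (q1 * q2)) <= harm (S N) ^ r * (q1 * q2)).
  { rewrite Rabs_mult, (Rabs_pos_eq (q1 * q2)) by lra.
    apply Rmult_le_compat_r; [lra|]. eapply Rle_trans; [apply c_bound | exact Hh]. }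
  eapply Rle_trans; [apply Rabs_triang|]. rewrite Rabs_Ropp. lra.
Qed.

Lemma ex_series_pred_div_var : ex_series (fun n => Rabs (pred_div c (S n) - pred_div c n)).
Proof.
  apply (@ex_series_le R_AbsRing R_CompleteNormedModule _ (fun n => 2 * harm_weight r n)).
  - intro n. rewrite Rabs_Rabsolu. apply Rabs_pred_div_step_le.
  - apply (@ex_series_scal_l R_AbsRing R_NormedModule 2), ex_series_harm_weight.
Qed.

(* Dirichlet's test, the partial sums of [(-1)^n] being bounded. *)
Lemma ex_series_alt_pred_div : ex_series (fun n => (-1) ^ n * pred_div c n).
Proof.
  assert (Hdir := partial_summation_R (pred_div c) (fun n => (-1) ^ n)).
  eapply ex_series_ext; [|apply Hdir].
  - intro n. apply Rmult_comm.
  - exists 1. intro n. change norm with Rabs. rewrite sum_n_sign.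
    assert (-1 <= (-1) ^ n <= 1) by (apply Rabs_le_between; rewrite pow_1_abs; lra).
    apply Rabs_le. lra.
  - apply is_lim_seq_pred_div.
  - apply ex_series_pred_div_var.
Qed.

End PredDiv.

(** * Power series on the unit disc *)

Lemma CV_radius_ge_1 p a : (forall n, Rabs (a n) <= INR (S n) ^ p) -> Rbar_le 1 (CV_radius a).
Proof.
  revert a. induction p as [|p IHp]; intros a Ha.
  - apply (proj1 (CV_radius_bounded a)). exists 1. intro n.
    rewrite pow1, Rmult_1_r. exact (Ha n).
  - set (b := fun n => match n with O => 0 | S n' => a n' / INR (S n') end).
    assert (E : forall n, PS_derive b n = a n).
    { intro n. unfold PS_derive, b. field. pose proof (INR_S_pos n). lra. }
    rewrite <- (CV_radius_ext _ _ E), CV_radius_derive.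
    apply IHp. intros [|n]; unfold b.
    + rewrite Rabs_R0. apply pow_le, pos_INR.
    + pose proof (INR_S_pos n) as Hp. pose proof (Rinv_0_lt_compat _ Hp).
      unfold Rdiv. rewrite Rabs_mult, (Rabs_pos_eq (/ INR (S n))) by lra.
      apply Rle_trans with (INR (S n) ^ S p * / INR (S n)).
      { apply Rmult_le_compat_r; [lra | apply Ha]. }
      replace (INR (S n) ^ S p * / INR (S n)) with (INR (S n) ^ p) 
        by (change (INR (S n) ^ S p) with (INR (S n) * INR (S n) ^ p); field; lra).
      apply pow_incr. split; [lra | apply le_INR; lia].
Qed.

Lemma Rabs_lt_CV_radius p a x :
  (forall n, Rabs (a n) <= INR (S n) ^ p) -> Rabs x < 1 -> Rbar_lt (Rabs x) (CV_radius a).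
Proof.
  intros Ha Hx. pose proof (CV_radius_ge_1 p a Ha) as Hr.
  destruct (CV_radius a) as [r| |]; simpl in *; try tauto. lra.
Qed.

Lemma ex_pseries_1 (a : nat -> R) : ex_series a -> ex_pseries a 1.
Proof.
  intros Ha. eapply ex_series_ext; [|exact Ha]. intro n. simpl.
  rewrite pow_n_pow, pow1. symmetry. apply (@scal_one R_Ring).
Qed.

(* Abel's theorem when the radius is exactly 1, plain continuity when it is larger. *)
Lemma filterlim_PSeries_at_left_1 a :
  Rbar_le 1 (CV_radius a) -> ex_pseries a 1 ->
  filterlim (PSeries a) (at_left 1) (locally (PSeries a 1)).
Proof.
  intros Hr Hex.
  assert (Hinterior : Rbar_lt 1 (CV_radius a) ->
                      filterlim (PSeries a) (at_left 1) (locally (PSeries a 1))).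
  { intros Hlt. apply (filterlim_filter_le_1 (F := locally 1)).
    - apply filter_le_within.
    - apply continuity_pt_filterlim, PSeries_continuity. rewrite Rabs_R1. exact Hlt. }
  destruct (CV_radius a) as [r| |] eqn:Er; simpl in Hr;
    [| apply Hinterior; exact I | contradiction].
  destruct (Rle_lt_or_eq_dec 1 r Hr) as [Hlt | <-]; [apply Hinterior; exact Hlt|].
  assert (HAbel := Abel a). rewrite Er in HAbel. apply HAbel; simpl; [lra | exact I | exact Hex].
Qed.

Lemma is_lim_seq_PSeries_left_1 a xs :
  Rbar_le 1 (CV_radius a) -> ex_pseries a 1 ->
  is_lim_seq xs 1 -> (forall p, xs p < 1) ->
  is_lim_seq (fun p => PSeries a (xs p)) (PSeries a 1).
Proof.
  intros Hr Hex Hxs Hlt.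
  apply (filterlim_comp _ _ _ xs (PSeries a) eventually (at_left 1)).
  - intros P [eps HP]. apply is_lim_seq_spec in Hxs. destruct (Hxs eps) as [N HN].
    exists N. intros p Hp. apply HP; [|apply Hlt]. apply HN, Hp.
  - apply filterlim_PSeries_at_left_1; assumption.
Qed.

Lemma PSeries_shift b x :
  PSeries (fun n => match n with O => 0 | S n' => b n' end) x = x * PSeries b x.
Proof. rewrite <- PSeries_incr_1. apply PSeries_ext. intros [|n]; reflexivity. Qed.

Lemma PSeries_add_shift a b x :
  Rbar_lt (Rabs x) (CV_radius a) -> Rbar_lt (Rabs x) (CV_radius b) ->
  PSeries a x + x * PSeries b x =
  PSeries (fun n => a n + match n with O => 0 | S n' => b n' end) x.
Proof.
  intros Ha Hb. rewrite <- PSeries_shift, <- PSeries_plus.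
  - reflexivity.
  - apply CV_radius_inside. exact Ha.
  - apply CV_radius_inside. change (fun n => match n with O => 0 | S n' => b n' end)
      with (PS_incr_1 b). rewrite CV_radius_incr_1. exact Hb.
Qed.

(** * Generating functions *)

Lemma harm_le_INR n : harm n <= INR n.
Proof.
  induction n as [|n IHn]; [rewrite harm_0; simpl; lra|].
  pose proof (Rinv_INR_S_le_1 n). rewrite harm_S, S_INR in *. lra.
Qed.

Lemma Rabs_mzv_trunc_le_pow s n : unit_entries s -> Rabs (mzv_trunc s n) <= INR (S n) ^ length s.
Proof.
  intros Hs. eapply Rle_trans; [apply Rabs_mzv_trunc_le, Hs|].
  apply pow_incr. split; [apply harm_ge0|].
  eapply Rle_trans; [apply harm_le_INR | apply le_INR; lia].
Qed.

Lemma unit_entries_repeat i : unit_entries (repeat 1%Z i).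
Proof. induction i; constructor; auto. Qed.

Definition mzv_tail (k j : nat) : list Z := repeat 1%Z j ++ (-1)%Z :: repeat 1%Z k.

Lemma unit_entries_mzv_tail k j : unit_entries (mzv_tail k j).
Proof.
  apply Forall_app. split; [apply unit_entries_repeat|].
  constructor; [reflexivity | apply unit_entries_repeat].
Qed.

Lemma mzv_trunc_tail_0 k j : mzv_trunc (mzv_tail k j) 0 = 0.
Proof. unfold mzv_tail. destruct j; apply mzv_trunc_cons_0. Qed.

Lemma mzv_trunc_tail_S_S k j n :
  mzv_trunc (mzv_tail k (S j)) (S n)
  = mzv_trunc (mzv_tail k (S j)) n + mzv_trunc (mzv_tail k j) n / INR (S n).
Proof.
  unfold mzv_tail. cbn [repeat app]. rewrite mzv_trunc_cons_S, mzv_term_1. unfold Rdiv. ring.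
Qed.

Definition mhs (i n : nat) : R := mzv_trunc (repeat 1%Z i) n.

Lemma mzv_trunc_tail_0_S k n :
  mzv_trunc (mzv_tail k 0) (S n) = mzv_trunc (mzv_tail k 0) n + (-1) ^ S n / INR (S n) * mhs k n.
Proof. unfold mzv_tail. simpl app. rewrite mzv_trunc_cons_S, mzv_term_m1. reflexivity. Qed.

Lemma mhs_0 n : mhs 0 n = 1.
Proof. reflexivity. Qed.

Lemma mhs_S_0 i : mhs (S i) 0 = 0.
Proof. apply mzv_trunc_cons_0. Qed.

Lemma mhs_S_S i n : mhs (S i) (S n) = mhs (S i) n + mhs i n / INR (S n).
Proof. unfold mhs. simpl repeat. rewrite mzv_trunc_cons_S, mzv_term_1. unfold Rdiv. ring. Qed.

Lemma Rabs_mhs_le i n : Rabs (mhs i n) <= INR (S n) ^ i.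
Proof.
  unfold mhs. rewrite <- (repeat_length 1%Z i) at 2.
  apply Rabs_mzv_trunc_le_pow, unit_entries_repeat.
Qed.

Definition Li_coef (l i n : nat) : R := if Nat.eqb n 0 then 0 else mhs i (n - 1) / INR n ^ l.

(* [Li_ones l i] is the multiple polylogarithm Li_{l,{1}_i}. *)
Definition Li_ones (l i : nat) (v : R) : R := PSeries (Li_coef l i) v.

Definition mhs_gf (i : nat) (v : R) : R := PSeries (mhs i) v.

Definition alt_coef (s : list Z) (n : nat) : R := (-1) ^ n * pred_div (mzv_trunc s) n.

(* [zeta_gf k j 1] is zeta(-1, {1}_j, -1, {1}_k), see [mzv_converges_to_m1_cons]. *)
Definition zeta_gf (k j : nat) (x : R) : R := PSeries (alt_coef (mzv_tail k j)) x.

Lemma Rabs_Li_coef_le l i n : Rabs (Li_coef l i n) <= INR (S n) ^ i.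
Proof.
  unfold Li_coef. destruct n as [|n]; simpl Nat.eqb; cbv iota.
  { rewrite Rabs_R0. apply pow_le, pos_INR. }
  rewrite Nat.sub_succ, Nat.sub_0_r.
  assert (Hl : 1 <= INR (S n) ^ l)
    by (apply pow_R1_Rle; rewrite S_INR; pose proof (pos_INR n); lra).
  unfold Rdiv. rewrite Rabs_mult, Rabs_inv, (Rabs_pos_eq (INR (S n) ^ l)) by lra.
  assert (Hinv : 0 < / INR (S n) ^ l <= 1).
  { split; [apply Rinv_0_lt_compat; lra|]. rewrite <- Rinv_1. apply Rinv_le_contravar; lra. }
  pose proof (Rabs_mhs_le i n) as Hm. pose proof (Rabs_pos (mhs i n)).
  assert (INR (S n) ^ i <= INR (S (S n)) ^ i)
    by (apply pow_incr; split; [apply pos_INR | apply le_INR; lia]).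
  nra.
Qed.

Lemma Rabs_alt_coef_le s n : unit_entries s -> Rabs (alt_coef s n) <= INR (S n) ^ length s.
Proof.
  intros Hs. unfold alt_coef. rewrite Rabs_mult, pow_1_abs, Rmult_1_l.
  destruct n as [|n].
  { unfold pred_div. simpl. rewrite Rabs_R0. apply pow_le. lra. }
  rewrite pred_div_S. pose proof (INR_S_pos n) as Hn.
  assert (0 < / INR (S n)) by (apply Rinv_0_lt_compat; lra).
  unfold Rdiv. rewrite Rabs_mult, (Rabs_pos_eq (/ INR (S n))) by lra.
  pose proof (Rabs_mzv_trunc_le_pow s n Hs) as Hc.
  pose proof (Rinv_INR_S_le_1 n).
  assert (INR (S n) ^ length s <= INR (S (S n)) ^ length s)
    by (apply pow_incr; split; [apply pos_INR | apply le_INR; lia]).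
  pose proof (Rabs_pos (mzv_trunc s n)).
  nra.
Qed.

Lemma Li_coef_S l i n : Li_coef l i (S n) = PS_derive (Li_coef (S l) i) n.
Proof.
  unfold PS_derive, Li_coef. simpl Nat.eqb. cbv iota.
  rewrite !Nat.sub_succ, !Nat.sub_0_r. pose proof (INR_S_pos n).
  change (INR (S n) ^ S l) with (INR (S n) * INR (S n) ^ l).
  field. split; [apply pow_nonzero|]; lra.
Qed.

Lemma PS_derive_Li_coef_1 i n : PS_derive (Li_coef 1 i) n = mhs i n.
Proof.
  unfold PS_derive, Li_coef. simpl Nat.eqb. cbv iota.
  rewrite Nat.sub_succ, Nat.sub_0_r, pow_1. pose proof (INR_S_pos n). field. lra.
Qed.

Lemma Li_coef_1_mhs_diff i n :
  mhs (S i) n + match n with O => 0 | S n' => - mhs (S i) n' end = Li_coef 1 i n.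
Proof.
  destruct n as [|n].
  - rewrite mhs_S_0. unfold Li_coef. simpl. ring.
  - rewrite mhs_S_S. unfold Li_coef. simpl Nat.eqb. cbv iota.
    rewrite Nat.sub_succ, Nat.sub_0_r, pow_1. ring.
Qed.

Lemma PS_derive_alt_coef s n : PS_derive (alt_coef s) n = (-1) ^ S n * mzv_trunc s n.
Proof.
  unfold PS_derive, alt_coef. rewrite pred_div_S. pose proof (INR_S_pos n). field. lra.
Qed.

Lemma alt_coef_tail_rec_S k j n :
  PS_derive (alt_coef (mzv_tail k (S j))) n
  + match n with O => 0 | S n' => PS_derive (alt_coef (mzv_tail k (S j))) n' end
  = - alt_coef (mzv_tail k j) n.
Proof.
  rewrite PS_derive_alt_coef. destruct n as [|n].
  - rewrite mzv_trunc_tail_0. unfold alt_coef, pred_div. simpl. ring.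
  - rewrite PS_derive_alt_coef, mzv_trunc_tail_S_S. unfold alt_coef. rewrite pred_div_S.
    simpl pow. ring.
Qed.

Lemma alt_coef_tail_rec_0 k n :
  PS_derive (alt_coef (mzv_tail k 0)) n
  + match n with O => 0 | S n' => PS_derive (alt_coef (mzv_tail k 0)) n' end
  = - Li_coef 1 k n.
Proof.
  rewrite PS_derive_alt_coef. destruct n as [|n].
  - rewrite mzv_trunc_tail_0. unfold Li_coef. simpl. ring.
  - rewrite PS_derive_alt_coef, mzv_trunc_tail_0_S. unfold Li_coef. simpl Nat.eqb. cbv iota.
    rewrite Nat.sub_succ, Nat.sub_0_r, pow_1.
    assert (Hsq : (-1) ^ n * (-1) ^ n = 1)
      by (rewrite <- Rpow_mult_distr; replace (-1 * -1) with 1 by ring; apply pow1).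
    pose proof (INR_S_pos n).
    replace ((-1) ^ S (S n)) with ((-1) ^ n) by (simpl; ring).
    replace ((-1) ^ S n) with (- (-1) ^ n) by (simpl; ring).
    transitivity (- ((-1) ^ n * (-1) ^ n) * mhs k n / INR (S n)); [field; lra|].
    rewrite Hsq. field. lra.
Qed.

Lemma Rabs_lt_CV_radius_Li_coef l i v : Rabs v < 1 -> Rbar_lt (Rabs v) (CV_radius (Li_coef l i)).
Proof. apply (Rabs_lt_CV_radius i), Rabs_Li_coef_le. Qed.

Lemma Rabs_lt_CV_radius_mhs i v : Rabs v < 1 -> Rbar_lt (Rabs v) (CV_radius (mhs i)).
Proof. apply (Rabs_lt_CV_radius i), Rabs_mhs_le. Qed.

Lemma Rabs_lt_CV_radius_alt_coef k j x :
  Rabs x < 1 -> Rbar_lt (Rabs x) (CV_radius (alt_coef (mzv_tail k j))).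
Proof.
  apply (Rabs_lt_CV_radius (length (mzv_tail k j))).
  intro n. apply Rabs_alt_coef_le, unit_entries_mzv_tail.
Qed.

Lemma Li_ones_eq_mul l i v : Li_ones l i v = v * PSeries (PS_derive (Li_coef (S l) i)) v.
Proof.
  unfold Li_ones. rewrite <- PSeries_shift. apply PSeries_ext.
  intros [|n]; [reflexivity | apply Li_coef_S].
Qed.

Lemma is_derive_Li_ones l i v :
  Rabs v < 1 -> is_derive (Li_ones (S l) i) v (PSeries (PS_derive (Li_coef (S l) i)) v).
Proof. intros Hv. apply is_derive_PSeries, Rabs_lt_CV_radius_Li_coef, Hv. Qed.

Lemma is_derive_Li_ones_1 i v : Rabs v < 1 -> is_derive (Li_ones 1 i) v (mhs_gf i v).
Proof.
  intros Hv. unfold mhs_gf. rewrite <- (PSeries_ext _ _ v (PS_derive_Li_coef_1 i)).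
  apply is_derive_Li_ones, Hv.
Qed.

Lemma mhs_gf_0 v : Rabs v < 1 -> mhs_gf 0 v = / (1 - v).
Proof.
  intros Hv. unfold mhs_gf, PSeries. rewrite <- Series_geom by exact Hv.
  apply Series_ext. intro n. rewrite mhs_0. ring.
Qed.

Lemma one_sub_mul_mhs_gf_S i v : Rabs v < 1 -> (1 - v) * mhs_gf (S i) v = Li_ones 1 i v.
Proof.
  intros Hv. unfold mhs_gf, Li_ones.
  replace ((1 - v) * PSeries (mhs (S i)) v)
    with (PSeries (mhs (S i)) v + v * PSeries (PS_opp (mhs (S i))) v)
    by (rewrite PSeries_opp; ring).
  rewrite PSeries_add_shift.
  - apply PSeries_ext. intro n. rewrite <- Li_coef_1_mhs_diff. destruct n; reflexivity.
  - apply Rabs_lt_CV_radius_mhs, Hv.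
  - rewrite CV_radius_opp. apply Rabs_lt_CV_radius_mhs, Hv.
Qed.

Definition zeta_gf_derive (k j : nat) (x : R) : R :=
  PSeries (PS_derive (alt_coef (mzv_tail k j))) x.

Lemma is_derive_zeta_gf k j x : Rabs x < 1 -> is_derive (zeta_gf k j) x (zeta_gf_derive k j x).
Proof. intros Hx. apply is_derive_PSeries, Rabs_lt_CV_radius_alt_coef, Hx. Qed.

Lemma one_add_mul_zeta_gf_derive_shift k j x :
  Rabs x < 1 ->
  (1 + x) * zeta_gf_derive k j x
  = PSeries (fun n => PS_derive (alt_coef (mzv_tail k j)) n
               + match n with O => 0 | S n' => PS_derive (alt_coef (mzv_tail k j)) n' end) x.
Proof.
  intros Hx. unfold zeta_gf_derive. rewrite Rmult_plus_distr_r, Rmult_1_l.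
  apply PSeries_add_shift; rewrite CV_radius_derive; apply Rabs_lt_CV_radius_alt_coef, Hx.
Qed.

Lemma one_add_mul_zeta_gf_derive_S k j x :
  Rabs x < 1 -> (1 + x) * zeta_gf_derive k (S j) x = - zeta_gf k j x.
Proof.
  intros Hx. rewrite one_add_mul_zeta_gf_derive_shift by exact Hx.
  rewrite (PSeries_ext _ _ x (alt_coef_tail_rec_S k j)).
  unfold zeta_gf. rewrite <- PSeries_opp. reflexivity.
Qed.

Lemma one_add_mul_zeta_gf_derive_0 k x :
  Rabs x < 1 -> (1 + x) * zeta_gf_derive k 0 x = - Li_ones 1 k x.
Proof.
  intros Hx. rewrite one_add_mul_zeta_gf_derive_shift by exact Hx.
  rewrite (PSeries_ext _ _ x (alt_coef_tail_rec_0 k)).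
  unfold Li_ones. rewrite <- PSeries_opp. reflexivity.
Qed.

(** * The differential system *)

Lemma is_derive_val_eq (f : R -> R) (x l l' : R) : is_derive f x l -> l = l' -> is_derive f x l'.
Proof. intros Hf <-. exact Hf. Qed.

Lemma eq_on_interval_of_is_derive (f g D : R -> R) a b c :
  (forall t, a < t < b -> is_derive f t (D t)) ->
  (forall t, a < t < b -> is_derive g t (D t)) ->
  a < c < b -> f c = g c -> forall v, a < v < b -> f v = g v.
Proof.
  intros Hf Hg Hc Hfg v Hv.
  assert (H0 : forall t, a < t < b -> is_derive (fun s => f s - g s) t 0).
  { intros t Ht. replace 0 with (D t - D t) by ring.
    apply (is_derive_minus f g); [apply Hf | apply Hg]; exact Ht. }
  enough (f v - g v = f c - g c) by lra.
  destruct (Rtotal_order v c) as [Hlt | [-> | Hgt]]; [| reflexivity |].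
  - apply (eq_is_derive (fun s => f s - g s)); [|exact Hlt]. intros t Ht. apply H0. lra.
  - symmetry. apply (eq_is_derive (fun s => f s - g s)); [|exact Hgt]. intros t Ht. apply H0. lra.
Qed.

Definition pow_fact (n : nat) (x : R) : R := x ^ n / INR (fact n).

Lemma fact_pos n : 0 < INR (fact n).
Proof. apply lt_0_INR, lt_O_fact. Qed.

Lemma pow_fact_ge0 n x : 0 <= x -> 0 <= pow_fact n x.
Proof. intros Hx. apply Rmult_le_pos; [apply pow_le, Hx | left; apply Rinv_0_lt_compat, fact_pos]. Qed.

Lemma pow_fact_0 x : pow_fact 0 x = 1.
Proof. unfold pow_fact. simpl. field. Qed.

Lemma pow_fact_S_0 n : pow_fact (S n) 0 = 0.
Proof. unfold pow_fact. simpl. unfold Rdiv. ring. Qed.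

Lemma is_derive_pow_fact (g : R -> R) (n : nat) (t dg : R) :
  is_derive g t dg -> is_derive (fun s => pow_fact (S n) (g s)) t (pow_fact n (g t) * dg).
Proof.
  intros Hg. unfold pow_fact.
  assert (E : forall s, / INR (fact (S n)) * g s ^ S n = g s ^ S n / INR (fact (S n)))
    by (intro s; unfold Rdiv; ring).
  apply (is_derive_ext _ _ _ _ E).
  eapply is_derive_val_eq; [apply is_derive_scal, is_derive_pow, Hg|].
  rewrite fact_simpl, mult_INR. simpl pred.
  pose proof (fact_pos n). pose proof (INR_S_pos n). field. lra.
Qed.

Lemma sum_pow_fact_binomial a b j :
  sum_n (fun i => pow_fact (j - i) a * pow_fact i b) j = pow_fact j (a + b).
Proof.
  unfold pow_fact. rewrite sum_n_Reals, (Rplus_comm a b), binomial.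
  unfold Rdiv at 3. rewrite (Rmult_comm (sum_f_R0 _ _)), scal_sum.
  apply sum_eq. intros i Hi. unfold Binomial.C.
  pose proof (fact_pos i). pose proof (fact_pos (j - i)). pose proof (fact_pos j).
  field. repeat split; lra.
Qed.

Lemma is_derive_neg_ln_one_sub t : t < 1 -> is_derive (fun s => - ln (1 - s)) t (/ (1 - t)).
Proof. intros Ht. auto_derive; [lra | field; lra]. Qed.

Lemma is_derive_ln_one_sub t : t < 1 -> is_derive (fun s => ln (1 - s)) t (- / (1 - t)).
Proof. intros Ht. auto_derive; [lra | field; lra]. Qed.

Lemma is_derive_neg_ln_two_mul t : 0 < t -> is_derive (fun s => - ln (2 * s)) t (- / t).
Proof. intros Ht. auto_derive; [lra | field; lra]. Qed.

Lemma Li_ones_1_closed_of_mhs_gf i :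
  (forall t, Rabs t < 1 -> mhs_gf i t = pow_fact i (- ln (1 - t)) / (1 - t)) ->
  forall v, Rabs v < 1 -> Li_ones 1 i v = pow_fact (S i) (- ln (1 - v)).
Proof.
  intros Hgf v Hv. apply Rabs_def2 in Hv.
  apply (eq_on_interval_of_is_derive (Li_ones 1 i) (fun s => pow_fact (S i) (- ln (1 - s)))
           (mhs_gf i) (-1) 1 0); [| | lra | | lra].
  - intros t Ht. apply is_derive_Li_ones_1, Rabs_def1; lra.
  - intros t Ht. rewrite Hgf by (apply Rabs_def1; lra).
    eapply is_derive_val_eq; [apply is_derive_pow_fact, is_derive_neg_ln_one_sub; lra|].
    reflexivity.
  - unfold Li_ones. rewrite PSeries_0, Rminus_0_r, ln_1, Ropp_0, pow_fact_S_0. reflexivity.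
Qed.

Lemma mhs_gf_S_of_Li_ones_1 i v :
  Li_ones 1 i v = pow_fact (S i) (- ln (1 - v)) -> Rabs v < 1 ->
  mhs_gf (S i) v = pow_fact (S i) (- ln (1 - v)) / (1 - v).
Proof.
  intros HLi Hv. apply Rabs_def2 in Hv as Hv'.
  rewrite <- HLi, <- (one_sub_mul_mhs_gf_S i v Hv). field. lra.
Qed.

Lemma mhs_gf_0_closed t : Rabs t < 1 -> mhs_gf 0 t = pow_fact 0 (- ln (1 - t)) / (1 - t).
Proof. intros Ht. rewrite mhs_gf_0, pow_fact_0 by exact Ht. unfold Rdiv. ring. Qed.

Lemma Li_ones_1_closed i : forall v, Rabs v < 1 -> Li_ones 1 i v = pow_fact (S i) (- ln (1 - v)).
Proof.
  induction i as [|i IHi]; apply Li_ones_1_closed_of_mhs_gf.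
  - apply mhs_gf_0_closed.
  - intros t Ht. apply mhs_gf_S_of_Li_ones_1; [apply IHi|]; exact Ht.
Qed.

Lemma mhs_gf_closed i v : Rabs v < 1 -> mhs_gf i v = pow_fact i (- ln (1 - v)) / (1 - v).
Proof.
  intros Hv. destruct i as [|i]; [apply mhs_gf_0_closed, Hv|].
  apply mhs_gf_S_of_Li_ones_1; [apply Li_ones_1_closed|]; exact Hv.
Qed.

Lemma is_derive_Li_ones_div l i v : 0 < v < 1 -> is_derive (Li_ones (S l) i) v (Li_ones l i v / v).
Proof.
  intros Hv. eapply is_derive_val_eq; [apply is_derive_Li_ones, Rabs_def1; lra|].
  rewrite Li_ones_eq_mul. field. lra.
Qed.

Lemma Li_ones_0_div i v : 0 < v < 1 -> Li_ones 0 i v / v = pow_fact i (- ln (1 - v)) / (1 - v).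
Proof.
  intros Hv. rewrite <- mhs_gf_closed by (apply Rabs_def1; lra).
  rewrite Li_ones_eq_mul. unfold mhs_gf. rewrite <- (PSeries_ext _ _ v (PS_derive_Li_coef_1 i)).
  field. lra.
Qed.

(* [Li_log_sum q s i v = sum_(p <= q) (-ln 2v)^p/p! Li_{s+1+q-p,{1}_i}(v)], an antiderivative of
   [(-ln 2v)^q/q! Li_{s,{1}_i}(v) / v]. *)
Fixpoint Li_log_sum (q s i : nat) (v : R) : R :=
  match q with
  | O => Li_ones (S s) i v
  | S q' => pow_fact q (- ln (2 * v)) * Li_ones (S s) i v + Li_log_sum q' (S s) i v
  end.

Lemma is_derive_Li_log_sum q : forall s i v, 0 < v < 1 ->
  is_derive (Li_log_sum q s i) v (pow_fact q (- ln (2 * v)) * (Li_ones s i v / v)).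
Proof.
  induction q as [|q IHq]; intros s i v Hv; simpl Li_log_sum.
  { eapply is_derive_val_eq; [apply is_derive_Li_ones_div, Hv|]. rewrite pow_fact_0. ring. }
  eapply is_derive_val_eq.
  - apply (is_derive_plus (fun t => pow_fact (S q) (- ln (2 * t)) * Li_ones (S s) i t)).
    + apply (is_derive_mult (fun t => pow_fact (S q) (- ln (2 * t))) (Li_ones (S s) i));
        [| apply is_derive_Li_ones_div, Hv | intros; apply Rmult_comm].
      apply is_derive_pow_fact, is_derive_neg_ln_two_mul. lra.
    + apply IHq, Hv.
  - cbn. field. lra.
Qed.

Lemma Li_log_sum_half q : forall s i, Li_log_sum q s i (1/2) = Li_ones (S (s + q)) i (1/2).
Proof.
  induction q as [|q IHq]; intros s i; simpl Li_log_sum.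
  - rewrite Nat.add_0_r. reflexivity.
  - rewrite IHq. replace (S s + q)%nat with (s + S q)%nat by lia.
    replace (2 * (1/2)) with 1 by field.
    rewrite ln_1, Ropp_0, pow_fact_S_0. ring.
Qed.

Lemma is_derive_Li_log_sum_S k i v : 0 < v < 1 ->
  is_derive (Li_log_sum (S k) 0 i) v
    (pow_fact (S k) (- ln (2 * v)) * (pow_fact i (- ln (1 - v)) / (1 - v))).
Proof.
  intros Hv. eapply is_derive_val_eq; [apply is_derive_Li_log_sum, Hv|].
  rewrite Li_ones_0_div by exact Hv. reflexivity.
Qed.

Definition polylog_side (k j : nat) (v : R) : R :=
  sum_n (fun i => pow_fact (j - i) (ln (1 - v))
                  * (Li_log_sum (S k) 0 i (1/2) - Li_log_sum (S k) 0 i v)) j.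

Definition zeta_side (k j : nat) (v : R) : R := (-1) ^ S j * zeta_gf k j (1 - 2 * v).

Lemma polylog_side_S k j v :
  polylog_side k (S j) v
  = sum_n (fun i => pow_fact (S (j - i)) (ln (1 - v))
                    * (Li_log_sum (S k) 0 i (1/2) - Li_log_sum (S k) 0 i v)) j
    + (Li_log_sum (S k) 0 (S j) (1/2) - Li_log_sum (S k) 0 (S j) v).
Proof.
  unfold polylog_side. rewrite sum_n_S, Nat.sub_diag, pow_fact_0, Rmult_1_l. f_equal.
  apply sum_n_ext_loc. intros i Hi. rewrite Nat.sub_succ_l by exact Hi. reflexivity.
Qed.

Lemma sum_pow_fact_opp_cancel j x :
  sum_n (fun i => pow_fact (S (j - i)) x * pow_fact i (- x)) j + pow_fact (S j) (- x) = 0.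
Proof.
  rewrite <- (pow_fact_S_0 j), <- (Rplus_opp_r x), <- sum_pow_fact_binomial, sum_n_S.
  rewrite Nat.sub_diag, pow_fact_0, Rmult_1_l. f_equal.
  apply sum_n_ext_loc. intros i Hi. rewrite Nat.sub_succ_l by exact Hi. reflexivity.
Qed.

Lemma is_derive_const_sub (c : R) (G : R -> R) (t dG : R) :
  is_derive G t dG -> is_derive (fun v => c - G v) t (- dG).
Proof.
  intros HG. apply (is_derive_val_eq _ _ (0 - dG)); [|ring].
  apply (is_derive_minus (fun _ => c) G); [|exact HG].
  apply (@is_derive_const R_AbsRing R_NormedModule).
Qed.

Lemma is_derive_pow_fact_ln_one_sub_mul n (G : R -> R) (t dG : R) :
  t < 1 -> is_derive G t dG ->
  is_derive (fun v => pow_fact (S n) (ln (1 - v)) * G v) t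
    (pow_fact n (ln (1 - t)) * - / (1 - t) * G t + pow_fact (S n) (ln (1 - t)) * dG).
Proof.
  intros Ht HG.
  apply (is_derive_mult (fun v => pow_fact (S n) (ln (1 - v))) G);
    [| exact HG | intros; apply Rmult_comm].
  apply (is_derive_pow_fact (fun v => ln (1 - v))), is_derive_ln_one_sub, Ht.
Qed.

(* The forcing terms cancel by the binomial theorem, since ln(1-v) + (-ln(1-v)) = 0. *)
Lemma is_derive_polylog_side_S k j t : 0 < t < 1 ->
  is_derive (polylog_side k (S j)) t (- polylog_side k j t / (1 - t)).
Proof.
  intros Ht.
  set (M := pow_fact (S k) (- ln (2 * t))). set (N := ln (1 - t)).
  set (J := fun i => Li_log_sum (S k) 0 i).
  set (G := fun i v => J i (1/2) - J i v).
  assert (HG : forall i, is_derive (G i) t (- (M * (pow_fact i (- N) / (1 - t)))))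
    by (intro i; apply is_derive_const_sub, is_derive_Li_log_sum_S, Ht).
  apply (is_derive_ext
           (fun v => sum_n (fun i => pow_fact (S (j - i)) (ln (1 - v)) * G i v) j + G (S j) v));
    [intro v; symmetry; apply polylog_side_S|].
  apply (is_derive_val_eq _ _
    (sum_n (fun i => pow_fact (j - i) N * - / (1 - t) * G i t
                     + pow_fact (S (j - i)) N * - (M * (pow_fact i (- N) / (1 - t)))) j
     - M * (pow_fact (S j) (- N) / (1 - t)))).
  - apply (is_derive_plus (fun v => sum_n (fun i => pow_fact (S (j - i)) (ln (1 - v)) * G i v) j));
      [|apply HG].
    apply (is_derive_sum_n (fun i v => pow_fact (S (j - i)) (ln (1 - v)) * G i v)).
    intros i _. apply is_derive_pow_fact_ln_one_sub_mul, HG. lra.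
  - rewrite sum_n_add.
    assert (EA : forall i, pow_fact (j - i) N * - / (1 - t) * G i t
                           = - / (1 - t) * (pow_fact (j - i) N * G i t)) by (intro i; ring).
    assert (EB : forall i, pow_fact (S (j - i)) N * - (M * (pow_fact i (- N) / (1 - t)))
                           = - (M / (1 - t)) * (pow_fact (S (j - i)) N * pow_fact i (- N)))
      by (intro i; unfold Rdiv; ring).
    rewrite (sum_n_ext _ _ j EA), (sum_n_ext _ _ j EB), !sum_n_mul_l.
    pose proof (sum_pow_fact_opp_cancel j N) as Hcancel.
    unfold polylog_side, G, J in *. fold N. cbv beta.
    replace (sum_n (fun n => pow_fact (S (j - n)) N * pow_fact n (- N)) j)
      with (- pow_fact (S j) (- N)) by lra.
    field. lra.
Qed.

Lemma is_derive_polylog_side_0 k t : 0 < t < 1 ->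
  is_derive (polylog_side k 0) t (- pow_fact (S k) (- ln (2 * t)) / (1 - t)).
Proof.
  intros Ht. set (J := Li_log_sum (S k) 0 0).
  assert (E : forall v, J (1/2) - J v = polylog_side k 0 v)
    by (intro v; unfold polylog_side; rewrite sum_O, pow_fact_0, Rmult_1_l; reflexivity).
  apply (is_derive_ext _ _ _ _ E).
  eapply is_derive_val_eq; [apply is_derive_const_sub, is_derive_Li_log_sum_S, Ht|].
  rewrite pow_fact_0. field. lra.
Qed.

Lemma is_derive_zeta_side k j t : 0 < t < 1 ->
  is_derive (zeta_side k j) t ((-1) ^ S j * (-2 * zeta_gf_derive k j (1 - 2 * t))).
Proof.
  intros Ht. apply is_derive_scal.
  apply (is_derive_val_eq _ _ (-2 * zeta_gf_derive k j (1 - 2 * t))); [|reflexivity].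
  apply (is_derive_comp (zeta_gf k j) (fun s => 1 - 2 * s)).
  - apply is_derive_zeta_gf, Rabs_def1; lra.
  - auto_derive; [exact I | ring].
Qed.

Lemma is_derive_zeta_side_0 k t : 0 < t < 1 ->
  is_derive (zeta_side k 0) t (- pow_fact (S k) (- ln (2 * t)) / (1 - t)).
Proof.
  intros Ht. eapply is_derive_val_eq; [apply is_derive_zeta_side, Ht|].
  assert (Hx : Rabs (1 - 2 * t) < 1) by (apply Rabs_def1; lra).
  pose proof (one_add_mul_zeta_gf_derive_0 k _ Hx) as Hgf.
  rewrite Li_ones_1_closed in Hgf by exact Hx.
  replace (1 - (1 - 2 * t)) with (2 * t) in Hgf by ring.
  replace (zeta_gf_derive k 0 (1 - 2 * t)) with (- pow_fact (S k) (- ln (2 * t)) / (2 * (1 - t)))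
    by (rewrite <- Hgf; field; lra).
  simpl. field. lra.
Qed.

Lemma is_derive_zeta_side_S k j t : 0 < t < 1 ->
  is_derive (zeta_side k (S j)) t (- zeta_side k j t / (1 - t)).
Proof.
  intros Ht. eapply is_derive_val_eq; [apply is_derive_zeta_side, Ht|].
  assert (Hx : Rabs (1 - 2 * t) < 1) by (apply Rabs_def1; lra).
  pose proof (one_add_mul_zeta_gf_derive_S k j _ Hx) as Hgf.
  replace (zeta_gf_derive k (S j) (1 - 2 * t)) with (- zeta_gf k j (1 - 2 * t) / (2 * (1 - t)))
    by (rewrite <- Hgf; field; lra).
  unfold zeta_side. simpl pow. field. lra.
Qed.

Lemma zeta_side_half k j : zeta_side k j (1/2) = 0.
Proof.
  unfold zeta_side, zeta_gf. replace (1 - 2 * (1/2)) with 0 by field.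
  rewrite PSeries_0. unfold alt_coef, pred_div. simpl. ring.
Qed.

Lemma polylog_side_half k j : polylog_side k j (1/2) = 0.
Proof.
  unfold polylog_side. rewrite <- (sum_n_zero j). apply sum_n_ext. intro i.
  rewrite Rminus_eq_0. apply Rmult_0_r.
Qed.

Theorem zeta_side_eq_polylog_side k j v : 0 < v < 1 -> zeta_side k j v = polylog_side k j v.
Proof.
  revert v. induction j as [|j IHj]; intros v Hv.
  - apply (eq_on_interval_of_is_derive _ _
             (fun t => - pow_fact (S k) (- ln (2 * t)) / (1 - t)) 0 1 (1/2));
      [apply is_derive_zeta_side_0 | apply is_derive_polylog_side_0 | lra | | exact Hv].
    rewrite zeta_side_half, polylog_side_half. reflexivity.
  - apply (eq_on_interval_of_is_derive _ _ (fun t => - polylog_side k j t / (1 - t)) 0 1 (1/2));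
      [| apply is_derive_polylog_side_S | lra | | exact Hv].
    + intros t Ht. rewrite <- IHj by exact Ht. apply is_derive_zeta_side_S, Ht.
    + rewrite zeta_side_half, polylog_side_half. reflexivity.
Qed.

(** * Limits as v -> 0 *)

Lemma is_lim_seq_sum_n (u : nat -> nat -> R) (l : nat -> R) n :
  (forall i, is_lim_seq (fun p => u i p) (l i)) ->
  is_lim_seq (fun p => sum_n (fun i => u i p) n) (sum_n l n).
Proof.
  intros Hu. induction n as [|n IHn].
  - rewrite sum_O. eapply is_lim_seq_ext; [|apply (Hu 0%nat)]. intro p. rewrite sum_O. reflexivity.
  - rewrite sum_n_S. eapply is_lim_seq_ext; [|apply (is_lim_seq_plus' _ _ _ _ IHn (Hu (S n)))].
    intro p. rewrite sum_n_S. reflexivity.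
Qed.

Definition dyadic (p : nat) : R := (1/2) ^ (p + 2).

Lemma dyadic_bounds p : 0 < dyadic p <= 1/4.
Proof.
  unfold dyadic. rewrite pow_add. split; [apply Rmult_lt_0_compat; apply pow_lt; lra|].
  assert (0 <= (1/2) ^ p) by (apply pow_le; lra).
  assert ((1/2) ^ p <= 1) by (rewrite <- (pow1 p) at 2; apply pow_incr; lra).
  simpl. nra.
Qed.

Lemma is_lim_seq_dyadic : is_lim_seq dyadic 0.
Proof.
  apply (is_lim_seq_ext (fun p => (1/2) ^ 2 * (1/2) ^ p));
    [intro p; unfold dyadic; rewrite pow_add; ring|].
  replace (Finite 0) with (Rbar_mult ((1/2) ^ 2) 0) by (simpl; f_equal; ring).
  apply is_lim_seq_scal_l, is_lim_seq_geom. rewrite Rabs_pos_eq; lra.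
Qed.

Lemma neg_ln_two_mul_dyadic p : - ln (2 * dyadic p) = INR (S p) * ln 2.
Proof.
  unfold dyadic. replace (2 * (1/2) ^ (p + 2)) with (/ 2 ^ S p).
  - rewrite ln_Rinv, ln_pow by (try apply pow_lt; lra). ring.
  - replace (p + 2)%nat with (S (S p)) by lia. replace (1/2) with (/ 2) by field. rewrite pow_inv.
    change (2 ^ S (S p)) with (2 * 2 ^ S p). field. apply pow_nonzero. lra.
Qed.

Lemma Li_ones_le_linear l i :
  exists C, 0 <= C /\ forall v, 0 <= v <= 1/2 -> Rabs (Li_ones l i v) <= C * v.
Proof.
  set (b := PS_derive (Li_coef (S l) i)).
  assert (Hb : Rbar_lt (Rabs (1/2)) (CV_radius b)).
  { unfold b. rewrite CV_radius_derive. apply Rabs_lt_CV_radius_Li_coef. rewrite Rabs_pos_eq; lra. }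
  pose proof (CV_disk_inside b (1/2) Hb) as Hex.
  exists (Series (fun n => Rabs (b n * (1/2) ^ n))). split.
  - rewrite <- (PSeries_const_0 (1/2)). unfold PSeries.
    apply Series_le; [intro n; rewrite Rmult_0_l; split; [lra | apply Rabs_pos] | exact Hex].
  - intros v Hv. rewrite Li_ones_eq_mul. fold b.
    rewrite Rabs_mult, (Rabs_pos_eq v), Rmult_comm by lra.
    apply Rmult_le_compat_r; [lra|].
    assert (Hv1 : Rbar_lt (Rabs v) (CV_radius b)).
    { unfold b. rewrite CV_radius_derive. apply Rabs_lt_CV_radius_Li_coef. rewrite Rabs_pos_eq; lra. }
    unfold PSeries. eapply Rle_trans; [apply Series_Rabs, CV_disk_inside, Hv1|].
    apply Series_le; [|exact Hex]. intro n. split; [apply Rabs_pos|].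
    rewrite !Rabs_mult. apply Rmult_le_compat_l; [apply Rabs_pos|].
    rewrite !Rabs_pos_eq by (apply pow_le; lra). apply pow_incr. lra.
Qed.

Lemma is_lim_seq_poly_geom n : is_lim_seq (fun p => INR (S p) ^ n * (1/2) ^ p) 0.
Proof.
  set (a := fun p => INR (S p) ^ n).
  assert (Hex : ex_series (fun p => Rabs (a p * (1/2) ^ p))).
  { apply CV_disk_inside, (Rabs_lt_CV_radius n).
    - intro p. unfold a. rewrite Rabs_pos_eq; [lra | apply pow_le, pos_INR].
    - rewrite Rabs_pos_eq; lra. }
  eapply is_lim_seq_ext; [|apply (ex_series_lim_0 _ Hex)]. intro p. apply Rabs_pos_eq.
  apply Rmult_le_pos; apply pow_le; [apply pos_INR | lra].
Qed.

Lemma is_lim_seq_pow_fact_ln_Li_ones n l i :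
  is_lim_seq (fun p => pow_fact n (- ln (2 * dyadic p)) * Li_ones l i (dyadic p)) 0.
Proof.
  destruct (Li_ones_le_linear l i) as [C [HC HLi]].
  assert (Hln2 : 0 < ln 2) by (pose proof ln_lt_2; lra).
  set (K := pow_fact n (ln 2) * C / 4).
  assert (HK : 0 <= K) by (unfold K; pose proof (pow_fact_ge0 n (ln 2)); apply Rmult_le_pos; nra).
  apply is_lim_seq_abs_0.
  apply is_lim_seq_le_le with (u := fun _ => 0) (w := fun p => K * (INR (S p) ^ n * (1/2) ^ p)).
  - intro p. split; [apply Rabs_pos|].
    pose proof (dyadic_bounds p) as Hp. specialize (HLi (dyadic p) ltac:(lra)).
    assert (Hpf : 0 <= pow_fact n (INR (S p) * ln 2))
      by (apply pow_fact_ge0, Rmult_le_pos; [apply pos_INR | lra]).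
    rewrite Rabs_mult, neg_ln_two_mul_dyadic, (Rabs_pos_eq _ Hpf).
    apply Rle_trans with (pow_fact n (INR (S p) * ln 2) * (C * dyadic p));
      [apply Rmult_le_compat_l; assumption|].
    unfold K, pow_fact, dyadic. rewrite Rpow_mult_distr, pow_add.
    right. pose proof (fact_pos n). simpl. field. lra.
  - apply is_lim_seq_const.
  - replace 0 with (K * 0) by ring. apply (is_lim_seq_scal_l _ K 0), is_lim_seq_poly_geom.
Qed.

Lemma is_lim_seq_Li_log_sum q : forall s i, is_lim_seq (fun p => Li_log_sum q s i (dyadic p)) 0.
Proof.
  induction q as [|q IHq]; intros s i; simpl Li_log_sum.
  - eapply is_lim_seq_ext; [|apply (is_lim_seq_pow_fact_ln_Li_ones 0 (S s) i)].
    intro p. cbv beta. rewrite pow_fact_0. ring.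
  - replace (Finite 0) with (Finite (0 + 0)) by (f_equal; ring).
    apply is_lim_seq_plus'; [apply is_lim_seq_pow_fact_ln_Li_ones | apply IHq].
Qed.

Lemma is_lim_seq_pow_fact_ln_one_sub n :
  is_lim_seq (fun p => pow_fact n (ln (1 - dyadic p))) (pow_fact n 0).
Proof.
  replace (pow_fact n 0) with ((fun x => pow_fact n (ln (1 - x))) 0)
    by (cbv beta; rewrite Rminus_0_r, ln_1; reflexivity).
  apply (is_lim_seq_continuous (fun x => pow_fact n (ln (1 - x)))); [|apply is_lim_seq_dyadic].
  apply continuity_pt_filterlim.
  apply (@ex_derive_continuous R_AbsRing R_NormedModule (fun x => pow_fact n (ln (1 - x)))).
  unfold pow_fact. auto_derive. lra.
Qed.

Lemma sum_pow_fact_0 (a : nat -> R) j : sum_n (fun i => pow_fact (j - i) 0 * a i) j = a j.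
Proof.
  destruct j as [|j]; [rewrite sum_O, pow_fact_0; apply Rmult_1_l|].
  rewrite sum_n_S, Nat.sub_diag, pow_fact_0, Rmult_1_l.
  rewrite (sum_n_ext_loc _ (fun _ => 0)), sum_n_zero; [apply Rplus_0_l|].
  intros i Hi. rewrite Nat.sub_succ_l, pow_fact_S_0 by exact Hi. apply Rmult_0_l.
Qed.

Lemma is_lim_seq_polylog_side k j :
  is_lim_seq (fun p => polylog_side k j (dyadic p)) (Li_ones (k + 2) j (1/2)).
Proof.
  assert (HK : Li_ones (k + 2) j (1/2)
               = sum_n (fun i => pow_fact (j - i) 0 * (Li_log_sum (S k) 0 i (1/2) - 0)) j).
  { rewrite sum_pow_fact_0, Rminus_0_r, Li_log_sum_half. f_equal. lia. }
  rewrite HK. apply is_lim_seq_sum_n. intro i.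
  apply is_lim_seq_mult'; [apply is_lim_seq_pow_fact_ln_one_sub|].
  apply is_lim_seq_minus'; [apply is_lim_seq_const | apply is_lim_seq_Li_log_sum].
Qed.

(** * Convergence of both series *)

Lemma Li_converges_to_Li_ones x l i :
  Rabs x < 1 -> Li_converges_to x (l :: repeat 1%nat i) (Li_ones l i x).
Proof.
  intros Hx. unfold Li_converges_to, Li_ones, PSeries.
  assert (E : forall N, sum_n (fun n => Li_coef l i n * x ^ n) N
                        = Li_trunc x (l :: repeat 1%nat i) N).
  { intro N. unfold Li_trunc. rewrite map_repeat. apply sum_n_ext_R.
    intros [|n]; unfold Li_coef; [simpl; ring|].
    unfold mhs. simpl Nat.eqb. cbv iota. unfold Rdiv. simpl (Z.of_nat 1). ring. }
  apply (is_lim_seq_ext _ _ _ E), Series_correct, ex_series_Rabs, CV_disk_inside.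
  apply Rabs_lt_CV_radius_Li_coef, Hx.
Qed.

Lemma mzv_trunc_m1_cons s N : mzv_trunc ((-1)%Z :: s) N = sum_n (fun n => alt_coef s n * 1 ^ n) N.
Proof.
  cbn [mzv_trunc]. apply sum_n_ext_R. intros [|n].
  - unfold alt_coef, pred_div. simpl. ring.
  - unfold alt_coef. rewrite pred_div_S, mzv_term_m1, pow1. simpl Nat.eqb. cbv iota.
    rewrite Nat.sub_succ, Nat.sub_0_r. unfold Rdiv. ring.
Qed.

Section AlternatingHead.

Variable s : list Z.
Hypothesis s_unit : unit_entries s.
Hypothesis s_trunc_0 : mzv_trunc s 0 = 0.

Lemma ex_series_alt_coef : ex_series (alt_coef s).
Proof.
  exact (ex_series_alt_pred_div (mzv_trunc s) (length s) s_trunc_0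
           (fun n => Rabs_mzv_trunc_le s n s_unit) (fun n => Rabs_mzv_trunc_step_le s n s_unit)).
Qed.

Lemma mzv_converges_to_m1_cons : mzv_converges_to ((-1)%Z :: s) (PSeries (alt_coef s) 1).
Proof.
  unfold mzv_converges_to. apply (is_lim_seq_ext (sum_n (fun n => alt_coef s n * 1 ^ n))).
  - intro N. symmetry. apply mzv_trunc_m1_cons.
  - apply Series_correct. eapply ex_series_ext; [|apply ex_series_alt_coef].
    intro n. rewrite pow1. symmetry. apply Rmult_1_r.
Qed.

End AlternatingHead.

Lemma is_lim_seq_zeta_gf_dyadic k j :
  is_lim_seq (fun p => zeta_gf k j (1 - 2 * dyadic p)) (zeta_gf k j 1).
Proof.
  apply is_lim_seq_PSeries_left_1.
  - apply (CV_radius_ge_1 (length (mzv_tail k j))). intro n.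
    apply Rabs_alt_coef_le, unit_entries_mzv_tail.
  - apply ex_pseries_1, ex_series_alt_coef; [apply unit_entries_mzv_tail | apply mzv_trunc_tail_0].
  - replace (Finite 1) with (Finite (1 - 2 * 0)) by (f_equal; ring).
    apply is_lim_seq_minus'; [apply is_lim_seq_const|].
    apply (is_lim_seq_scal_l _ 2 0), is_lim_seq_dyadic.
  - intro p. pose proof (dyadic_bounds p). lra.
Qed.

Theorem theorem3p2 (m k : nat) :
  exists L : R,
    Li_converges_to (1 / 2) ((k + 2)%nat :: repeat 1%nat m) L /\
    mzv_converges_to ((-1)%Z :: repeat 1%Z m ++ (-1)%Z :: repeat 1%Z k)
                     ((-1) ^ (m + 1) * L).
Proof.
  exists (Li_ones (k + 2) m (1/2)). split.
  { apply Li_converges_to_Li_ones. rewrite Rabs_pos_eq; lra. }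
  assert (Hzeta : mzv_converges_to ((-1)%Z :: mzv_tail k m) (zeta_gf k m 1))
    by (apply mzv_converges_to_m1_cons; [apply unit_entries_mzv_tail | apply mzv_trunc_tail_0]).
  assert (Hside : is_lim_seq (fun p => zeta_side k m (dyadic p)) ((-1) ^ S m * zeta_gf k m 1))
    by (apply (is_lim_seq_scal_l _ _ (zeta_gf k m 1)), is_lim_seq_zeta_gf_dyadic).
  assert (Hpoly : is_lim_seq (fun p => zeta_side k m (dyadic p)) (Li_ones (k + 2) m (1/2))).
  { eapply is_lim_seq_ext; [|apply is_lim_seq_polylog_side].
    intro p. symmetry. apply zeta_side_eq_polylog_side. pose proof (dyadic_bounds p). lra. }
  assert (Hval : (-1) ^ S m * zeta_gf k m 1 = Li_ones (k + 2) m (1/2)).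
  { apply is_lim_seq_unique in Hside, Hpoly. rewrite Hside in Hpoly. injection Hpoly. auto. }
  rewrite <- Hval, Nat.add_1_r, <- Rmult_assoc, <- Rpow_mult_distr.
  replace (-1 * -1) with 1 by ring. rewrite pow1, Rmult_1_l. exact Hzeta.
Qed.
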